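(* Let $n$ be a composite positive integer and let $\pi\in S(\mathbb{Z}_n)$ be a permutation induced by a polynomial with coefficients in $\mathbb{Z}_n$ (i.e. there is $f\in\mathbb{Z}_n[x]$ with $\pi(x)=f(x)$ for all $x\in\mathbb{Z}_n$). Then $t([\pi])\leq n-3$.
   Context: $S(\mathbb{Z}_n)$ is the set of bijections $\mathbb{Z}_n\to\mathbb{Z}_n$. For $\pi\in S(\mathbb{Z}_n)$, $\mathrm{cyc}(\pi)$ is the number of cycles (including fixed points) of $\pi$, $t(\pi)=n-\mathrm{cyc}(\pi)$, $[\pi]=\{x\mapsto \pi(x+b): b\in\mathbb{Z}_n\}$ and $t([\pi])=\min_{\sigma\in[\pi]}t(\sigma)$. *)

From HB Require Import structures.
From mathcomp Require Import all_boot all_order all_algebra all_fingroup.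
Set Implicit Arguments. Unset Strict Implicit. Unset Printing Implicit Defensive.
Import GRing.Theory.
Local Open Scope ring_scope.

Definition t_perm (n : nat) (s : {perm 'Z_n}) : nat := (n - #|porbits s|)%N.

Lemma shift_inj (n : nat) (pi : {perm 'Z_n}) (b : 'Z_n) :
  injective (fun x : 'Z_n => pi (x + b)).
Proof. by move=> x y /perm_inj /addIr. Qed.

Definition shiftp (n : nat) (pi : {perm 'Z_n}) (b : 'Z_n) : {perm 'Z_n} :=
  perm (@shift_inj n pi b).

(* t([pi]) = min over b in Z_n of t(x |-> pi(x+b)); the seed n is harmless
   since t_perm is always <= n *)
Definition t_class (n : nat) (pi : {perm 'Z_n}) : nat :=
  \big[minn/n]_(b : 'Z_n) t_perm (shiftp pi b).

From HB Require Import structures.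
From mathcomp Require Import all_boot all_order all_algebra all_fingroup.
Set Implicit Arguments.
Unset Strict Implicit.
Unset Printing Implicit Defensive.

Import Order.TTheory GRing.Theory.
Local Open Scope ring_scope.

(* Normalise pi so that 0 is a fixed point.  A polynomial map preserves
   congruences modulo any element a of Z_n, so when a is a nonzero non-unit
   (which exists as n is composite) the ideal aZ_n is a union of cycles.
   Hence {0}, the cycle of a (inside aZ_n) and the cycle of 1 (outside aZ_n)
   are three distinct cycles. *)

Lemma horner_sub_mulr (R : comNzRingType) (f : {poly R}) (x y : R) :
  exists q : R, f.[x] - f.[y] = (x - y) * q.
Proof.
have : root (f - (f.[y])%:P) y by rewrite /root !hornerE subrr.
case/factor_theorem=> q fE; exists q.[x].
by have := congr1 (horner^~ x) fE; rewrite !hornerE mulrC.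
Qed.

Lemma horner_congr_mulr (R : comNzRingType) (f : {poly R}) (a x y : R) :
  (exists k, x - y = a * k) -> exists k, f.[x] - f.[y] = a * k.
Proof.
case=> k xyE; have [q ->] := horner_sub_mulr f x y.
by exists (k * q); rewrite xyE mulrA.
Qed.

Lemma Zp_nonzero_nonunit (n : nat) : (1 < n)%N -> ~~ prime n ->
  exists a : 'Z_n, a != 0 /\ a \isn't a GRing.unit.
Proof.
move=> n_gt1 n_nprime; set d := pdiv n.
have d_gt1 : (1 < d)%N by rewrite prime_gt1 ?pdiv_prime.
have d_dvd : (d %| n)%N := pdiv_dvd n.
have d_lt : (d < n)%N.
  rewrite ltn_neqAle pdiv_leq 1?ltnW // andbT.
  by apply: contraNneq n_nprime => <-; rewrite pdiv_prime.
exists d%:R; split.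
  by rewrite -val_eqE /= val_Zp_nat // modn_small // -lt0n ltnW.
by rewrite unitZpE // /coprime (gcdn_idPr d_dvd) neq_ltn d_gt1 orbT.
Qed.

Lemma porbit_closed (T : finType) (s : {perm T}) (P : T -> Prop) (x y : T) :
  {homo s : z / P z} -> P x -> y \in porbit s x -> P y.
Proof.
move=> sP Px /porbitP[i ->]; rewrite permX.
by elim: i => [|i IHi] //=; apply: sP.
Qed.

Lemma three_le_card_porbits (T : finType) (s : {perm T}) (x y z : T) :
  y \notin porbit s x -> z \notin porbit s x -> z \notin porbit s y ->
  (3 <= #|porbits s|)%N.
Proof.
rewrite -!eq_porbit_mem => nxy nxz nyz.
have sub : porbit s x |: [set porbit s y; porbit s z] \subset porbits s.
  by apply/subsetP=> X; rewrite !inE => /or3P[] /eqP ->; apply: imset_f.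
apply: leq_trans (subset_leq_card sub).
rewrite cardsU1 cards2 !inE !(eq_sym (porbit s x)).
by rewrite (negbTE nxy) (negbTE nxz) eq_sym nyz.
Qed.

Lemma t_class_le_shiftp (n : nat) (pi : {perm 'Z_n}) (b : 'Z_n) :
  (t_class pi <= t_perm (shiftp pi b))%N.
Proof. exact: (bigmin_le (T := nat)). Qed.

Theorem proposition1p6 (n : nat) (hn : (1 < n)%N) (hcomp : ~~ prime n)
  (pi : {perm 'Z_n}) (f : {poly 'Z_n}) (hf : forall x : 'Z_n, pi x = f.[x]) :
  (t_class pi <= n - 3)%N.
Proof.
have [a [a_neq0 a_nunit]] := Zp_nonzero_nonunit hn hcomp.
set b := (pi^-1)%g 0; set s := shiftp pi b.
have sE x : s x = f.[x + b] - f.[b] by rewrite permE /= -!hf permKV subr0.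
have s0 : {homo s : z / z = 0} by move=> _ ->; rewrite sE add0r subrr.
have sa : {homo s : z / exists k, z = a * k}.
  by move=> z az; rewrite sE; apply: horner_congr_mulr; rewrite addrK.
have aZa : exists k, a = a * k by exists 1; rewrite mulr1.
have aZ1 : ~ exists k, 1 = a * k.
  by case=> k /esym k_inv; case/unitrPr: a_nunit; exists k.
apply: leq_trans (t_class_le_shiftp pi b) _; rewrite leq_sub2l //.
apply: (@three_le_card_porbits _ s 0 a 1).
- by apply: contra a_neq0 => /(porbit_closed s0 (erefl 0)) ->.
- by apply/negP => /(porbit_closed s0 (erefl 0)) /eqP; rewrite oner_eq0.
- by apply/negP => /(porbit_closed sa aZa) /aZ1.
Qed.
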